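(* Let $\mu$ be a partition of $n$ and let $x_2^{\alpha_2}\cdots x_n^{\alpha_n}\in\mathcal{A}(\mu)$ be a monomial of degree $r$. Run the following procedure: set $\rho^{(n)}=\mu$; for $i=n,n-1,\dots,2$, impose the dimension-ordering on the current composition $\rho^{(i)}$, place the number $i$ in the box with dimension-order label $\alpha_i+1$, and delete that box to obtain a composition $\rho^{(i-1)}$ of $i-1$; finally place $1$ in the one remaining box, and let $T$ be the resulting filling of $\mu$ (all placed numbers restored). Then at every step the box with label $\alpha_i+1$ exists, $T$ is a row-strict filling of $\mu$ with exactly $r$ dimension pairs, and $\Phi(T)=x_2^{\alpha_2}\cdots x_n^{\alpha_n}$. Consequently, setting $\Psi(x^\alpha):=T$ defines a degree-preserving map $\Psi$ from $\mathcal{A}(\mu)$ to row-strict fillings of $\mu$ with $\Phi\circ\Psi=\mathrm{id}_{\mathcal{A}(\mu)}$.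
   Context: A composition $\rho$ of $n$ is a sequence of nonnegative integers summing to $n$, drawn with $\rho_k$ left-justified boxes in row $k$ (rows top to bottom, columns left to right); a partition is a weakly decreasing composition with positive parts. A filling places $1,\dots,n$ bijectively in the boxes; row-strict means entries increase left to right in each row. Dimension-ordering of a composition with $r$ nonzero rows: the far-right boxes of the nonzero rows are labelled $1,\dots,r$ in the order obtained by sorting them by column from rightmost column to leftmost, and within a column from top to bottom. Dimension pairs (with $h(j)=j$): $(a,b)$ is a dimension pair of a filling $T$ if (1) $b>a$; (2) $b$ lies in the same column as $a$ strictly below it, or in a column strictly left of $a$'s; (3) if a box immediately right of $a$ exists, containing $c$, then $b\le c$. $D^T_j$ is the set of dimension pairs $(a,j)$; $\Phi(T)=\prod_{j=2}^n x_j^{|D^T_j|}$. $\mathcal{A}(\mu)=\{\Phi(T): T \text{ a row-strict filling of }\mu\}$. *)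

From mathcomp Require Import all_boot.
Set Implicit Arguments. Unset Strict Implicit. Unset Printing Implicit Defensive.

(* A composition is a seq nat (row k has [nth 0 rho k] boxes, rows top to
   bottom, index 0 = top row).  A filling of a composition is a seq (seq nat):
   row k lists the entries of row k from left to right. *)

Definition is_partition (mu : seq nat) : bool :=
  sorted geq mu && all (fun x => 0 < x) mu.

Definition is_filling (n : nat) (mu : seq nat) (T : seq (seq nat)) : bool :=
  (shape T == mu) && perm_eq (flatten T) (iota 1 n).

Definition row_strict (T : seq (seq nat)) : bool := all (sorted ltn) T.

Definition row_of (T : seq (seq nat)) (a : nat) : nat := find (fun row => a \in row) T.
Definition col_of (T : seq (seq nat)) (a : nat) : nat := index a (nth [::] T (row_of T a)).

(* (a,b) is a dimension pair of T (with h(j) = j) *)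
Definition dim_pair (T : seq (seq nat)) (a b : nat) : bool :=
  let ra := row_of T a in let ca := col_of T a in
  let rb := row_of T b in let cb := col_of T b in
  let rowa := nth [::] T ra in
  [&& a < b,
      ((cb == ca) && (ra < rb)) || (cb < ca)
    & (ca.+1 < size rowa) ==> (b <= nth 0 rowa ca.+1)].

(* Phi(T) = prod_{j=2}^n x_j^{|D_j|}, encoded as its exponent sequence
   [:: |D_2|; ...; |D_n|]. *)
Definition Phi (n : nat) (T : seq (seq nat)) : seq nat :=
  [seq count (fun a => dim_pair T a j) (iota 1 n) | j <- iota 2 n.-1].

Definition num_dim_pairs (n : nat) (T : seq (seq nat)) : nat :=
  \sum_(a <- iota 1 n) \sum_(b <- iota 1 n) dim_pair T a b.

Definition in_A (n : nat) (mu : seq nat) (alpha : seq nat) : Prop :=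
  exists T, [/\ is_filling n mu T, row_strict T & Phi n T = alpha].

(* Dimension-ordering: list of the nonzero rows of rho, in label order
   (label l = position l-1): sorted by column of the far-right box from
   rightmost to leftmost (i.e. by decreasing row length), ties broken
   top to bottom. *)
Definition dim_rel (rho : seq nat) (k1 k2 : nat) : bool :=
  (nth 0 rho k2 < nth 0 rho k1) || ((nth 0 rho k1 == nth 0 rho k2) && (k1 <= k2)).

Definition dim_order (rho : seq nat) : seq nat :=
  sort (dim_rel rho) [seq k <- iota 0 (size rho) | 0 < nth 0 rho k].

(* exponent used at step i; step i = 1 (place 1 in the unique remaining box)
   is encoded as choosing label 1 *)
Definition expo (alpha : seq nat) (i : nat) : nat :=
  if i is 1 then 0 else nth 0 alpha (i - 2).

(* The procedure: returns the positions (row, column) where i, i-1, ..., 1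
   are placed, or None if at some step the required label does not exist. *)
Fixpoint procedure (alpha : seq nat) (i : nat) (rho : seq nat)
  : option (seq (nat * nat)) :=
  match i with
  | 0 => Some [::]
  | i'.+1 =>
      let ord := dim_order rho in
      if expo alpha i < size ord then
        let k := nth 0 ord (expo alpha i) in
        let c := (nth 0 rho k).-1 in
        match procedure alpha i' (set_nth 0 rho k c) with
        | Some s => Some ((k, c) :: s)
        | None => None
        end
      else None
  end.

Definition fill (n : nat) (mu : seq nat) (s : seq (nat * nat)) : seq (seq nat) :=
  [seq [seq n - index (k, c) s | c <- iota 0 (nth 0 mu k)] | k <- iota 0 (size mu)].

Definition Psi (n : nat) (mu : seq nat) (alpha : seq nat) : option (seq (seq nat)) :=
  match procedure alpha n mu with
  | Some s => Some (fill n mu s)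
  | None => None
  end.

From mathcomp Require Import all_boot.
Set Implicit Arguments. Unset Strict Implicit. Unset Printing Implicit Defensive.

(* For a row-strict filling T write rho^(j) for the shape occupied by the
   entries <= j.  The pair (a, j) is a dimension pair exactly when a is the
   far-right box of a row of rho^(j) lying before the row of j in the
   dimension-ordering of rho^(j); so |D_j| + 1 is the dimension-order label of
   the box of j in rho^(j).  Run on x^alpha = Phi(T), the procedure therefore
   deletes at step j the box of j in T, turning rho^(j) into rho^(j-1), and it
   rebuilds T. *)

Lemma count_eq0 (T : Type) (p : pred T) (s : seq T) : (count p s == 0) = ~~ has p s.
Proof. by rewrite has_count -leqNgt leqn0. Qed.

Lemma mem_flatten_nth (T : eqType) (ss : seq (seq T)) k x :
  x \in nth [::] ss k -> x \in flatten ss.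
Proof.
case: (ltnP k (size ss)) => [k_lt|size_le]; last by rewrite nth_default.
by move=> x_in; apply/flattenP; exists (nth [::] ss k); rewrite ?mem_nth.
Qed.

Lemma sorted_leq_nthE (s : seq nat) j c : sorted ltn s -> c < size s ->
  (nth 0 s c <= j) = (c < count (fun x => x <= j) s).
Proof.
elim: s c => [|x s IH] c //= s_sorted c_lt.
have [x_gt_s s_sorted'] : all (ltn x) s /\ sorted ltn s.
  by move: s_sorted; rewrite (path_sortedE ltn_trans) => /andP.
case: (leqP x j) => [x_le|x_gt].
  by case: c c_lt => [|c] c_lt; rewrite /= ?x_le // add1n ltnS IH.
have -> : count (fun y => y <= j) s = 0.
  apply/eqP; rewrite count_eq0; apply/hasPn => y /(allP x_gt_s).
  by move/(ltn_trans x_gt); rewrite ltnNge.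
case: c c_lt => [|c] c_lt /=; first by rewrite leqNgt x_gt.
apply/negbTE; rewrite -ltnNge (ltn_trans x_gt) //.
exact/(allP x_gt_s)/mem_nth.
Qed.

Lemma sorted_count_leq_eqS (s : seq nat) j c : sorted ltn s -> c < size s ->
  (count (fun x => x <= j) s == c.+1)
    = (nth 0 s c <= j) && ((c.+1 < size s) ==> (j < nth 0 s c.+1)).
Proof.
move=> s_sorted c_lt; rewrite sorted_leq_nthE // eqn_leq andbC.
case: (ltnP c.+1 (size s)) => [c1_lt|size_le] /=.
  by rewrite (ltnNge j) sorted_leq_nthE // -leqNgt.
by rewrite (leq_trans (count_size _ _) size_le) andbT.
Qed.

Lemma count_index_eq (T : eqType) (s : seq T) c : uniq s ->
  count (fun x => index x s == c) s = (c < size s).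
Proof.
move=> s_uniq; case: (ltnP c (size s)) => [c_lt|size_le].
  have x0 : T by move: c_lt; case: s {s_uniq}.
  rewrite -(mem_nth x0 c_lt) -(count_uniq_mem _ s_uniq).
  apply: eq_in_count => x x_in /=.
  by apply/eqP/eqP => [<-|->]; rewrite ?nth_index ?index_uniq.
apply/eqP; rewrite count_eq0; apply/hasPn => x x_in.
by rewrite neq_ltn (leq_trans _ size_le) ?index_mem.
Qed.

Lemma count_indexS_eq (T : eqType) (s : seq T) c : uniq s ->
  count (fun x => c == (index x s).+1) s = (0 < c <= size s).
Proof.
case: c => [|c] s_uniq; first by rewrite (eq_count (a2 := pred0)) ?count_pred0.
rewrite -(count_index_eq c s_uniq); apply: eq_count => x /=; exact: eq_sym.
Qed.

Lemma index_sorted_count (T : eqType) (r : rel T) (s : seq T) x :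
  transitive r -> antisymmetric r -> sorted r s -> uniq s -> x \in s ->
  index x s = count (fun y => r y x && (y != x)) s.
Proof.
move=> r_trans r_anti s_sorted s_uniq x_in.
have s_split := cat_take_drop (index x s) s.
rewrite (drop_nth x) ?index_mem // nth_index // in s_split.
set s1 := take _ s in s_split; set s2 := drop _ s in s_split.
have : pairwise r (s1 ++ x :: s2) by rewrite s_split -sorted_pairwise.
rewrite pairwise_cat allrel_consr /= => /and3P[/andP[s1_r _] _ /andP[r_s2 _]].
have : uniq (s1 ++ x :: s2) by rewrite s_split.
rewrite cat_uniq /= => /and4P[_ /norP[x_notin1 _] _ _].
rewrite -s_split count_cat /= eqxx andbF add0n index_cat (negbTE x_notin1) /= eqxx.
have -> : count (fun y => r y x && (y != x)) s2 = 0.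
  apply/eqP; rewrite count_eq0; apply/hasPn => y y_in.
  apply/negP => /andP[r_yx]; apply/negP; rewrite negbK; apply/eqP/r_anti.
  by rewrite r_yx (allP r_s2).
rewrite -count_predT !addn0; apply: eq_in_count => y y_in /=.
by rewrite (allP s1_r y y_in); apply/esym; apply: contraNneq x_notin1 => <-.
Qed.

Section DimensionOrder.

Variable rho : seq nat.

Lemma dim_rel_trans : transitive (dim_rel rho).
Proof.
move=> y x z; rewrite /dim_rel.
case/orP=> [lt_yx|/andP[/eqP eq_xy le_xy]] /orP[lt_zy|/andP[/eqP eq_yz le_yz]].
- by rewrite (ltn_trans lt_zy lt_yx).
- by rewrite -eq_yz lt_yx.
- by rewrite eq_xy lt_zy.
- by rewrite eq_xy eq_yz eqxx (leq_trans le_xy le_yz) orbT.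
Qed.

Lemma dim_rel_total : total (dim_rel rho).
Proof.
by move=> x y; rewrite /dim_rel; case: ltngtP => //= _; apply: leq_total.
Qed.

Lemma dim_rel_anti : antisymmetric (dim_rel rho).
Proof.
move=> x y; rewrite /dim_rel.
by case: ltngtP => //= _ /andP[le_xy le_yx]; apply/eqP; rewrite eqn_leq le_xy.
Qed.

Lemma mem_dim_order k : (k \in dim_order rho) = (k < size rho) && (0 < nth 0 rho k).
Proof. by rewrite mem_sort mem_filter mem_iota andbC. Qed.

Lemma index_dim_order k : k < size rho -> 0 < nth 0 rho k ->
  index k (dim_order rho) =
  count (fun k' => [&& 0 < nth 0 rho k', dim_rel rho k' k & k' != k]) (iota 0 (size rho)).
Proof.
move=> k_lt k_pos.
rewrite (index_sorted_count dim_rel_trans dim_rel_anti) ?mem_dim_order ?k_lt //.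
- rewrite (permP (permEl (perm_sort _ _))) count_filter.
  by apply: eq_count => k' /=; rewrite andbC.
- exact: sort_sorted dim_rel_total _.
- by rewrite sort_uniq filter_uniq ?iota_uniq.
Qed.

End DimensionOrder.

Lemma count_leq_succ (s : seq nat) j :
  count (fun x => x <= j.+1) s = count (fun x => x <= j) s + count_mem j.+1 s.
Proof.
elim: s => //= x s ->; rewrite addnACA; congr (_ + _).
case: (ltngtP x j.+1) => [x_lt|x_gt|->]; rewrite /= ?ltnn //.
  by rewrite -ltnS x_lt.
by rewrite leqNgt ltnW.
Qed.

Definition shape_upto (T : seq (seq nat)) (j : nat) : seq nat :=
  [seq count (fun x => x <= j) row | row <- T].

Section RowStrictFilling.

Variable T : seq (seq nat).
Hypotheses (T_uniq : uniq (flatten T)) (T_rows : row_strict T).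

Lemma row_of_lt a : a \in flatten T -> row_of T a < size T.
Proof.
by case/flattenP=> row row_in a_in; rewrite /row_of -has_find; apply/hasP; exists row.
Qed.

Lemma mem_row_of a : a \in flatten T -> a \in nth [::] T (row_of T a).
Proof.
case/flattenP=> row row_in a_in; apply: (nth_find [::] (a := fun row => a \in row)).
by apply/hasP; exists row.
Qed.

Lemma col_of_lt a : a \in flatten T -> col_of T a < size (nth [::] T (row_of T a)).
Proof. by move/mem_row_of; rewrite index_mem. Qed.

Lemma nth_col_of a : a \in flatten T -> nth 0 (nth [::] T (row_of T a)) (col_of T a) = a.
Proof. by move/mem_row_of/nth_index. Qed.

Lemma row_of_mem a k : a \in nth [::] T k -> row_of T a = k.
Proof.
rewrite /row_of; elim: T T_uniq k => [|row T' IH] uniq_rowT' k; first by rewrite nth_nil.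
case: k => [|k] /= a_in; first by rewrite a_in.
move: uniq_rowT'; rewrite cat_uniq => /and3P[_ disjoint uniqT'].
rewrite ifN ?(IH uniqT' k a_in) //; move: disjoint; apply: contra => a_row.
by apply/hasP; exists a => //; apply: mem_flatten_nth a_in.
Qed.

Lemma row_sorted k : sorted ltn (nth [::] T k).
Proof.
case: (ltnP k (size T)) => [k_lt|size_le]; last by rewrite nth_default.
exact/(allP T_rows)/mem_nth.
Qed.

Lemma row_uniq k : uniq (nth [::] T k).
Proof. exact: sorted_uniq ltn_trans ltnn _ (row_sorted k). Qed.

Lemma col_of_mem a k : a \in nth [::] T k -> col_of T a = index a (nth [::] T k).
Proof. by move=> a_in; rewrite /col_of (row_of_mem a_in). Qed.

Lemma row_col_of_inj a b : a \in flatten T -> b \in flatten T ->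
  row_of T a = row_of T b -> col_of T a = col_of T b -> a = b.
Proof.
by move=> a_in b_in row_eq col_eq; rewrite -(nth_col_of a_in) -(nth_col_of b_in) row_eq col_eq.
Qed.
Lemma nth_shape_upto j k : nth 0 (shape_upto T j) k = count (fun x => x <= j) (nth [::] T k).
Proof.
case: (ltnP k (size T)) => [k_lt|size_le]; first by rewrite (nth_map [::]).
by rewrite !nth_default ?size_map.
Qed.

Lemma shape_upto_row_of j : j \in flatten T ->
  nth 0 (shape_upto T j) (row_of T j) = (col_of T j).+1.
Proof.
move=> j_in; apply/eqP.
rewrite nth_shape_upto sorted_count_leq_eqS ?row_sorted ?col_of_lt // nth_col_of // leqnn.
apply/implyP => c1_lt; rewrite -[X in X < _](nth_col_of j_in).
by apply: (sorted_ltn_nth ltn_trans) => //; rewrite ?row_sorted ?inE ?col_of_lt.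
Qed.

Lemma shape_upto_succ j : j.+1 \in flatten T ->
  set_nth 0 (shape_upto T j.+1) (row_of T j.+1) (col_of T j.+1) = shape_upto T j.
Proof.
move=> j_in; apply: (@eq_from_nth _ 0) => [|i _].
  by rewrite size_set_nth !size_map; apply/maxn_idPr/row_of_lt.
rewrite nth_set_nth /= !nth_shape_upto count_leq_succ count_uniq_mem ?row_uniq //.
case: eqP => [->|ne_row].
  move: (shape_upto_row_of j_in).
  by rewrite nth_shape_upto count_leq_succ count_uniq_mem ?row_uniq ?mem_row_of // addn1 => -[].
by rewrite (_ : _ \in _ = false) ?addn0 //; apply/negP => /row_of_mem/esym.
Qed.

Lemma dim_pairE a j : a \in flatten T -> j \in flatten T ->
  dim_pair T a j = [&& nth 0 (shape_upto T j) (row_of T a) == (col_of T a).+1,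
                       row_of T a != row_of T j &
                       dim_rel (shape_upto T j) (row_of T a) (row_of T j)].
Proof.
move=> a_in j_in; rewrite /dim_pair /dim_rel (shape_upto_row_of j_in).
have col_a_lt := col_of_lt a_in; have row_a := nth_col_of a_in.
have col_j_lt := col_of_lt j_in; have row_j := nth_col_of j_in.
move: col_a_lt row_a col_j_lt row_j.
set ra := row_of T a; set ca := col_of T a; set k := row_of T j; set cj := col_of T j.
set R := nth [::] T ra => col_a_lt row_a col_j_lt row_j.
case: (eqVneq ra k) => [same_row|other_row].
  rewrite andbF; apply/negbTE/and3P => -[a_lt_j]; rewrite same_row ltnn andbF /=.
  move=> cj_lt_ca _; move: col_a_lt row_a; rewrite /R same_row => col_a_lt row_a.
  have := sorted_ltn_nth ltn_trans 0 (row_sorted k) cj ca.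
  rewrite !inE col_j_lt col_a_lt row_a row_j => /(_ isT isT cj_lt_ca).
  by move/(ltn_trans a_lt_j); rewrite ltnn.
have j_notin_R : j \notin R.
  by apply: contra other_row => /row_of_mem row_eq; rewrite /k row_eq.
have a_ne_j : a != j by apply: contraNneq j_notin_R => <-; rewrite -row_a mem_nth.
have last_le_j : (a < j) && ((ca.+1 < size R) ==> (j <= nth 0 R ca.+1))
                 = (nth 0 (shape_upto T j) ra == ca.+1).
  rewrite nth_shape_upto sorted_count_leq_eqS ?row_sorted // row_a -/R.
  rewrite (ltn_neqAle a) a_ne_j /=; case: (ltnP ca.+1 (size R)) => c1_lt //=.
  congr (_ && _); rewrite ltn_neqAle andb_idl // => _.
  by apply: contraNneq j_notin_R => ->; rewrite mem_nth.
case: (boolP (nth 0 (shape_upto T j) ra == ca.+1)) => [/eqP rho_ra|rho_ra] /=.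
  move: last_le_j; rewrite rho_ra eqxx ltnS eqSS => /andP[-> ->].
  by rewrite /= andbT orbC eq_sym (ltn_neqAle ra) other_row.
apply/negbTE; apply: contra rho_ra => /and3P[a_lt_j _ right_ge_j].
by rewrite -last_le_j a_lt_j.
Qed.

Lemma count_dim_pair_row j k : j \in flatten T -> k < size T ->
  count (fun a => dim_pair T a j) (nth [::] T k)
  = [&& 0 < nth 0 (shape_upto T j) k, dim_rel (shape_upto T j) k (row_of T j)
      & k != row_of T j].
Proof.
move=> j_in k_lt; set rho := shape_upto T j; set R := nth [::] T k.
have dim_pair_R a : a \in R -> dim_pair T a j
    = (nth 0 rho k == (index a R).+1) && ((k != row_of T j) && dim_rel rho k (row_of T j)).
  by move=> a_in; rewrite (dim_pairE (mem_flatten_nth a_in) j_in) (col_of_mem a_in) (row_of_mem a_in).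
case: (boolP ((k != row_of T j) && dim_rel rho k (row_of T j))) => [cond|ncond].
  rewrite (eq_in_count (a2 := fun a => nth 0 rho k == (index a R).+1)) => [|a /dim_pair_R->];
    last by rewrite cond andbT.
  rewrite count_indexS_eq ?row_uniq // nth_shape_upto count_size andbT.
  by case/andP: cond => -> ->; rewrite /= !andbT.
rewrite (eq_in_count (a2 := pred0)) ?count_pred0 => [|a /dim_pair_R->];
  last by rewrite (negbTE ncond) andbF.
suff -> : [&& 0 < nth 0 rho k, dim_rel rho k (row_of T j) & k != row_of T j] = false by [].
by apply/negbTE; apply: contra ncond => /and3P[_ -> ->].
Qed.

Lemma count_dim_pair j : j \in flatten T ->
  count (fun a => dim_pair T a j) (flatten T) = index (row_of T j) (dim_order (shape_upto T j)).
Proof.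
move=> j_in; rewrite index_dim_order ?size_map ?row_of_lt ?shape_upto_row_of //.
rewrite -[in flatten T](mkseq_nth [::] T) count_flatten /mkseq -map_comp -[in RHS]sumn_count.
by congr sumn; apply/eq_in_map => k; rewrite mem_iota => /andP[_ k_lt]; apply: count_dim_pair_row.
Qed.

End RowStrictFilling.

Lemma shape_upto_max n T : perm_eq (flatten T) (iota 1 n) -> shape_upto T n = shape T.
Proof.
move=> T_perm; apply/eq_in_map => row row_in /=; rewrite -count_predT.
apply: eq_in_count => x x_in /=.
have : x \in flatten T by apply/flattenP; exists row.
by rewrite (perm_mem T_perm) mem_iota add1n ltnS => /andP[_ ->].
Qed.

Lemma count_dim_pair_1 n T : count (fun a => dim_pair T a 1) (iota 1 n) = 0.
Proof.
apply/eqP; rewrite count_eq0; apply/hasPn => a.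
by rewrite mem_iota /dim_pair => /andP[a_pos _]; rewrite ltnNge a_pos.
Qed.

Lemma expo_Phi n T j : 0 < j <= n ->
  expo (Phi n T) j = count (fun a => dim_pair T a j) (iota 1 n).
Proof.
case: j => [|[|j]] //= j_le; first by rewrite count_dim_pair_1.
by rewrite subn2 /= /Phi (nth_map 0) ?nth_iota ?size_iota // ltn_predRL.
Qed.

Lemma num_dim_pairsE n T : num_dim_pairs n T = sumn (Phi n T).
Proof.
have sum_count (p : pred nat) s : \sum_(a <- s) (p a : nat) = count p s.
  by rewrite -sumn_count sumnE big_map.
rewrite /num_dim_pairs exchange_big sumnE big_map /=.
under eq_bigr do rewrite sum_count.
case: n => [|n]; first by rewrite !big_nil.
by rewrite -{1}[iota 1 n.+1]/(1 :: iota 2 n) big_cons count_dim_pair_1.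
Qed.

Fixpoint entry_positions (T : seq (seq nat)) (i : nat) : seq (nat * nat) :=
  if i is i'.+1 then (row_of T i, col_of T i) :: entry_positions T i' else [::].

Section Recovery.

Variables (n : nat) (T : seq (seq nat)).
Hypotheses (T_perm : perm_eq (flatten T) (iota 1 n)) (T_rows : row_strict T).

Let T_uniq : uniq (flatten T).
Proof. by rewrite (perm_uniq T_perm) iota_uniq. Qed.

Let mem_T v : (v \in flatten T) = (0 < v <= n).
Proof. by rewrite (perm_mem T_perm) mem_iota add1n ltnS. Qed.

Lemma procedure_shape_upto i : i <= n ->
  procedure (Phi n T) i (shape_upto T i) = Some (entry_positions T i).
Proof.
elim: i => [|i IH] i_lt //; cbn [procedure].
have i_in : i.+1 \in flatten T by rewrite mem_T.
have rho_i := shape_upto_row_of T_rows i_in.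
have row_i_in : row_of T i.+1 \in dim_order (shape_upto T i.+1).
  by rewrite mem_dim_order size_map row_of_lt // rho_i.
rewrite expo_Phi ?i_lt // -(permP T_perm) count_dim_pair // index_mem row_i_in.
by rewrite nth_index // rho_i /= shape_upto_succ // IH // ltnW.
Qed.

Lemma index_entry_positions i v : i <= n -> 0 < v <= i ->
  index (row_of T v, col_of T v) (entry_positions T i) = i - v.
Proof.
elim: i => [|i IH] i_le /andP[v_pos v_le] //=.
case: (eqVneq v i.+1) => [->|v_ne]; first by rewrite eqxx subnn.
have v_le_i : v <= i by rewrite -ltnS ltn_neqAle v_ne.
rewrite IH ?v_pos ?(ltnW i_le) // subSn // ifN //.
apply: contra v_ne => /eqP[row_eq col_eq].
apply/eqP/(@row_col_of_inj T); rewrite ?mem_T ?row_eq ?col_eq ?v_pos ?i_le //.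
by rewrite (leq_trans v_le_i) // ltnW.
Qed.

Lemma fill_entry_positions : fill n (shape T) (entry_positions T n) = T.
Proof.
rewrite /fill size_map -[RHS](mkseq_nth [::] T); apply/eq_in_map => k.
rewrite mem_iota => /andP[_ k_lt].
rewrite nth_shape -[RHS](mkseq_nth 0 (nth [::] T k)); apply/eq_in_map => c.
rewrite mem_iota => /andP[_ c_lt]; set v := nth 0 _ c.
have v_row : v \in nth [::] T k by apply: mem_nth.
have /mem_flatten_nth /[!mem_T] /andP[v_pos v_le] := v_row.
have col_v : col_of T v = c by rewrite (col_of_mem T_uniq v_row) index_uniq ?row_uniq.
rewrite -[k](row_of_mem T_uniq v_row) -[c]col_v index_entry_positions ?v_pos //.
exact: subKn.
Qed.

End Recovery.

Theorem mainTheorem5 (n : nat) (mu alpha : seq nat) (r : nat) :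
  is_partition mu -> sumn mu = n ->
  in_A n mu alpha -> sumn alpha = r ->
  exists T, [/\ Psi n mu alpha = Some T, is_filling n mu T, row_strict T,
               num_dim_pairs n T = r & Phi n T = alpha].
Proof.
move=> _ _ [T [T_filling T_rows <-]] <-.
have /andP[/eqP T_shape T_perm] := T_filling.
exists T; split=> //; last exact: num_dim_pairsE.
rewrite /Psi -T_shape -(shape_upto_max T_perm).
by rewrite procedure_shape_upto // (shape_upto_max T_perm) fill_entry_positions.
Qed.
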